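(* Let $\kappa \ge 1$ be an integer and let $J_m$ denote the nilpotent Jordan cell of size $m$ (the $m\times m$ matrix with ones on the superdiagonal and zeros elsewhere). Then both $J_\kappa \oplus J_\kappa \in \mathcal{B}(\mathbb{C}^{2\kappa})$ and $J_{\kappa+1} \oplus J_\kappa \in \mathcal{B}(\mathbb{C}^{2\kappa+1})$ can be written as $MN - NM$ with $M, N$ operators on the respective space satisfying $M^2 = 0 = N^2$. *)

From HB Require Import structures.
From mathcomp Require Import all_boot all_order all_algebra.
Set Implicit Arguments. Unset Strict Implicit. Unset Printing Implicit Defensive.
Import GRing.Theory Num.Theory.
Local Open Scope ring_scope.

Definition jordan_cell (R : nzRingType) (m : nat) : 'M[R]_m :=
  \matrix_(i < m, j < m) (if (nat_of_ord j == (nat_of_ord i).+1)%N then 1 else 0).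

Definition mx_dsum (R : nzRingType) (m n : nat) (A : 'M[R]_m) (B : 'M[R]_n)
  : 'M[R]_(m + n) := block_mx A 0 0 B.

Definition sqzero_commutator (R : nzRingType) (n : nat) (T : 'M[R]_n) : Prop :=
  exists M N : 'M[R]_n,
    M *m M = 0 /\ N *m N = 0 /\ M *m N - N *m M = T.

(* With M = [[0, A], [0, 0]] and N = [[0, 0], [B, 0]] for rectangular blocks
   A, B, both squares vanish and MN - NM = diag(AB, -BA).  Taking for A the
   m x n diagonal of signs (-1)^j and for B the n x m shift with signs
   (-1)^i, one gets AB = J_m and BA = -J_n whenever n <= m <= n + 1; the
   alternating signs are what turn BA into -J_n rather than J_n. *)
From HB Require Import structures.
From mathcomp Require Import all_boot all_order all_algebra.
From mathcomp Require Import zify.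
Set Implicit Arguments. Unset Strict Implicit. Unset Printing Implicit Defensive.
Local Open Scope ring_scope.
Import GRing.Theory.

Lemma sqzero_commutator_dsum (R : nzRingType) (m n : nat)
    (A : 'M[R]_(m, n)) (B : 'M[R]_(n, m)) (X : 'M[R]_m) (Y : 'M[R]_n) :
  A *m B = X -> B *m A = - Y -> sqzero_commutator (mx_dsum X Y).
Proof.
move=> AB_X BA_Y; exists (block_mx 0 A 0 0), (block_mx 0 0 B 0).
rewrite !mulmx_block !mul0mx !mulmx0 !addr0 !add0r block_mx0.
split=> //; split=> //.
by rewrite opp_block_mx add_block_mx AB_X BA_Y !oppr0 !addr0 add0r opprK.
Qed.

Definition sign_diag_mx (R : nzRingType) (m n : nat) : 'M[R]_(m, n) :=
  \matrix_(i < m, j < n) (if (i : nat) == j then (-1) ^+ j else 0).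

Definition sign_shift_mx (R : nzRingType) (n m : nat) : 'M[R]_(n, m) :=
  \matrix_(i < n, j < m) (if (j : nat) == i.+1 then (-1) ^+ i else 0).

Lemma mul_sign_diag_shift (R : nzRingType) (m n : nat) : (m <= n.+1)%N ->
  sign_diag_mx R m n *m sign_shift_mx R n m = jordan_cell R m.
Proof.
move=> le_m_Sn; apply/matrixP => i j; rewrite !mxE.
transitivity (\sum_(l < n | l == i :> nat)
                (if (j : nat) == i.+1 then 1 else 0 : R)).
  rewrite [RHS]big_mkcond; apply: eq_bigr => l _; rewrite !mxE eq_sym.
  case: eqP => [->|_]; last by rewrite mul0r.
  by case: eqP; rewrite ?mulr0 // -expr2 sqrr_sign.
rewrite (big_ord1_eq _ (fun=> _)); case: ltnP => // le_n_i; case: eqP => // j_Si.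
by move: (ltn_ord j); rewrite j_Si; lia.
Qed.

Lemma mul_sign_shift_diag (R : nzRingType) (m n : nat) : (n <= m)%N ->
  sign_shift_mx R n m *m sign_diag_mx R m n = - jordan_cell R n.
Proof.
move=> le_n_m; apply/matrixP => i j; rewrite !mxE.
transitivity (\sum_(l < m | l == j :> nat)
                (- (if (j : nat) == i.+1 then 1 else 0) : R)).
  rewrite [RHS]big_mkcond; apply: eq_bigr => l _; rewrite !mxE.
  case: (eqVneq (l : nat) j) => [->|_]; last by rewrite mulr0.
  case: eqP => [->|_]; last by rewrite mul0r oppr0.
  by rewrite exprS mulN1r mulrN -expr2 sqrr_sign.
by rewrite (big_ord1_eq _ (fun=> _)) (leq_trans (ltn_ord j) le_n_m).
Qed.

Lemma sqzero_commutator_jordan_dsum (R : nzRingType) (m n : nat) :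
  (n <= m <= n.+1)%N ->
  sqzero_commutator (mx_dsum (jordan_cell R m) (jordan_cell R n)).
Proof.
case/andP=> le_n_m le_m_Sn.
exact: sqzero_commutator_dsum (mul_sign_diag_shift R le_m_Sn)
                              (mul_sign_shift_diag R le_n_m).
Qed.

Theorem proposition3p13 (C : numClosedFieldType) (k : nat) (hk : (1 <= k)%N) :
  sqzero_commutator (mx_dsum (jordan_cell C k) (jordan_cell C k)) /\
  sqzero_commutator (mx_dsum (jordan_cell C k.+1) (jordan_cell C k)).
Proof.
split; apply: sqzero_commutator_jordan_dsum; by rewrite leqnn ?leqnSn.
Qed.
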